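(* Let $R\in\mathbb R$ and let $f:[0,R)\to\mathbb R$ be continuously differentiable and satisfy (h1) $f(0)>0$, $f'(0)=-1$; (h2) $f'$ is strictly increasing and convex; (h3) $f(t)<0$ for some $t\in(0,R)$. Let $\beta:=\sup_{t\in[0,R)}-f(t)$, $t_*:=\min f^{-1}(\{0\})$, $\bar\tau:=\sup\{t\in[0,R):f(t)<0\}$ and $\bar t:=\sup\{t\in[0,R):f'(t)<0\}$. Then: (i) $f'(t)<0$ for all $t\in[0,\bar t)$, and $f'(t)\ge0$ for all $t\in[0,R)\setminus[0,\bar t)$; (ii) $0<t_*<\bar t\le\bar\tau\le R$; (iii) $\beta=-\lim_{t\to\bar t^-}f(t)$ and $0<\beta<\bar t$. *)

From Stdlib Require Import Reals.
From Coquelicot Require Import Coquelicot.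
Open Scope R_scope.

Definition dom (R0 : R) (t : R) : Prop := 0 <= t < R0.

Definition has_deriv_on (R0 : R) (f f' : R -> R) (t : R) : Prop :=
  filterlim (fun s => (f s - f t) / (s - t))
    (within (fun s => dom R0 s /\ s <> t) (locally t)) (locally (f' t)).

Definition cont_on (R0 : R) (g : R -> R) (t : R) : Prop :=
  filterlim g (within (dom R0) (locally t)) (locally (g t)).

Definition C1_on (R0 : R) (f f' : R -> R) : Prop :=
  forall t, dom R0 t -> has_deriv_on R0 f f' t /\ cont_on R0 f' t.

Definition strictly_increasing_on (R0 : R) (g : R -> R) : Prop :=
  forall x y, dom R0 x -> dom R0 y -> x < y -> g x < g y.

Definition convex_on (R0 : R) (g : R -> R) : Prop :=
  forall x y l, dom R0 x -> dom R0 y -> 0 <= l <= 1 ->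
    g (l * x + (1 - l) * y) <= l * g x + (1 - l) * g y.

Definition beta_of (R0 : R) (f : R -> R) : Rbar :=
  Lub_Rbar (fun x => exists t, dom R0 t /\ x = - f t).

(* tau_bar := sup {t in [0,R) | f t < 0}; the set is bounded by R and
   (under h3) nonempty, so the sup is a real number. *)
Definition taubar_of (R0 : R) (f : R -> R) : R :=
  real (Lub_Rbar (fun t => dom R0 t /\ f t < 0)).

(* t_bar := sup {t in [0,R) | f' t < 0}; nonempty (contains 0) and bounded. *)
Definition tbar_of (R0 : R) (f' : R -> R) : R :=
  real (Lub_Rbar (fun t => dom R0 t /\ f' t < 0)).

Definition is_min_zero (R0 : R) (f : R -> R) (t : R) : Prop :=
  dom R0 t /\ f t = 0 /\ (forall s, dom R0 s -> f s = 0 -> t <= s).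

(** Since [f'] is strictly increasing with [f' 0 = -1], the set [{f' < 0}] is the
    interval [[0, tbar)], so [f] strictly decreases on [[0, tbar]] and does not
    decrease afterwards. Hence [f] has a unique zero before [tbar], found by the
    intermediate value theorem from a negative value of [f], and
    [sup (-f) = lim_{t -> tbar-} (-f t)]. Because [f' > -1] on [(0, R)], the mean
    value theorem gives [f b >= f a - (b - a)]; with [a = 0] this bounds [sup (-f)]
    and yields [beta < tbar], while [beta >= -f t > 0] for a point where [f < 0]. *)

From Stdlib Require Import Reals Lra Classical.
From Coquelicot Require Import Coquelicot.
Open Scope R_scope.

Lemma has_deriv_on_eps R0 f f' t : has_deriv_on R0 f f' t ->
  forall eps, 0 < eps -> exists d, 0 < d /\
  forall s, Rabs (s - t) < d -> dom R0 s -> s <> t ->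
    Rabs ((f s - f t) / (s - t) - f' t) < eps.
Proof.
intros H eps he.
destruct (proj1 (filterlim_locally _ _) H (mkposreal eps he)) as [d Hd].
exists d; split; [apply cond_pos|].
intros s Hs Hdom Hst; apply (Hd s); [exact Hs | split; assumption].
Qed.

Lemma cont_on_eps R0 g t : cont_on R0 g t ->
  forall eps, 0 < eps -> exists d, 0 < d /\
  forall s, Rabs (s - t) < d -> dom R0 s -> Rabs (g s - g t) < eps.
Proof.
intros H eps he.
destruct (proj1 (filterlim_locally _ _) H (mkposreal eps he)) as [d Hd].
exists d; split; [apply cond_pos|].
intros s Hs Hdom; apply (Hd s); assumption.
Qed.

(* Continuing [f] to the left of [0] by its tangent line makes the one-sided
   derivative at [0] two-sided, so Stdlib's MVT and IVT apply on [[0, R)]. *)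
Definition tangent_ext (f f' : R -> R) (x : R) : R :=
  if Rle_dec 0 x then f x else f 0 + f' 0 * x.

Lemma tangent_ext_nonneg f f' x : 0 <= x -> tangent_ext f f' x = f x.
Proof. intros Hx; unfold tangent_ext; destruct (Rle_dec 0 x); [reflexivity | lra]. Qed.

Section TangentExtension.

Variables (R0 : R) (f f' : R -> R).
Hypothesis hC1 : C1_on R0 f f'.

Lemma tangent_ext_derivable_0 : 0 < R0 ->
  derivable_pt_lim (tangent_ext f f') 0 (f' 0).
Proof.
intros R0pos eps he.
assert (H0 : dom R0 0) by (split; lra).
destruct (has_deriv_on_eps _ _ _ _ (proj1 (hC1 0 H0)) eps he) as [d [dpos Hd]].
assert (P : 0 < Rmin d R0) by (apply Rmin_pos; lra).
exists (mkposreal _ P); simpl; intros h hn hl.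
assert (hd : Rabs h < d) by (apply Rlt_le_trans with (1 := hl); apply Rmin_l).
assert (hR : Rabs h < R0) by (apply Rlt_le_trans with (1 := hl); apply Rmin_r).
apply Rabs_def2 in hR.
rewrite (tangent_ext_nonneg f f' 0), Rplus_0_l by lra.
destruct (Rle_dec 0 h) as [hp | hneg].
- rewrite tangent_ext_nonneg by lra.
  specialize (Hd h); rewrite Rminus_0_r in Hd.
  apply Hd; [exact hd | split; lra | exact hn].
- unfold tangent_ext; destruct (Rle_dec 0 h) as [|_]; [lra|].
  replace ((f 0 + f' 0 * h - f 0) / h - f' 0) with 0 by (field; exact hn).
  rewrite Rabs_R0; lra.
Qed.

Lemma tangent_ext_derivable_pos t : 0 < t < R0 ->
  derivable_pt_lim (tangent_ext f f') t (f' t).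
Proof.
intros Ht eps he.
assert (Hdom : dom R0 t) by (split; lra).
destruct (has_deriv_on_eps _ _ _ _ (proj1 (hC1 t Hdom)) eps he) as [d [dpos Hd]].
assert (P : 0 < Rmin d (Rmin t (R0 - t))) by (repeat apply Rmin_pos; lra).
exists (mkposreal _ P); simpl; intros h hn hl.
assert (hd : Rabs h < d) by (apply Rlt_le_trans with (1 := hl); apply Rmin_l).
assert (hm : Rabs h < Rmin t (R0 - t)) by (apply Rlt_le_trans with (1 := hl); apply Rmin_r).
assert (ht : Rabs h < t) by (apply Rlt_le_trans with (1 := hm); apply Rmin_l).
assert (hR : Rabs h < R0 - t) by (apply Rlt_le_trans with (1 := hm); apply Rmin_r).
apply Rabs_def2 in ht; apply Rabs_def2 in hR.
rewrite !tangent_ext_nonneg by lra.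
specialize (Hd (t + h)); replace (t + h - t) with h in Hd by ring.
apply Hd; [exact hd | split; lra | lra].
Qed.

Lemma tangent_ext_derivable t : dom R0 t ->
  derivable_pt_lim (tangent_ext f f') t (f' t).
Proof.
intros [t0 tR]; destruct (Req_dec t 0) as [-> | tn0].
- apply tangent_ext_derivable_0; lra.
- apply tangent_ext_derivable_pos; lra.
Qed.

Lemma C1_on_MVT a b : 0 <= a -> a < b -> b < R0 ->
  exists c, a < c < b /\ f b - f a = f' c * (b - a).
Proof.
intros ha hab hb.
destruct (MVT_cor2 (tangent_ext f f') f' a b hab) as [c [Hc Hcab]].
- intros c Hc; apply tangent_ext_derivable; split; lra.
- exists c; split; [exact Hcab|].
  rewrite <- !(tangent_ext_nonneg f f') by lra; exact Hc.
Qed.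

Lemma C1_on_IVT a b : 0 <= a -> a < b -> b < R0 -> f a > 0 -> f b < 0 ->
  exists z, a <= z <= b /\ f z = 0.
Proof.
intros ha hab hb fa fb.
destruct (Ranalysis5.IVT_interv (fun x => - tangent_ext f f' x) a b)
  as [z [Hz Hfz]].
- intros c Hc; apply continuity_pt_opp, derivable_continuous_pt.
  exists (f' c); apply tangent_ext_derivable; split; lra.
- exact hab.
- rewrite tangent_ext_nonneg; lra.
- rewrite tangent_ext_nonneg; lra.
- exists z; split; [exact Hz|].
  rewrite <- (tangent_ext_nonneg f f') by lra; lra.
Qed.

End TangentExtension.

Section BoundedLub.

Variables (E : R -> Prop) (x0 M : R).
Hypotheses (HE : E x0) (HM : forall x, E x -> x <= M).

Lemma Lub_Rbar_bounded_finite : Lub_Rbar E = Finite (real (Lub_Rbar E)).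
Proof.
destruct (Lub_Rbar_correct E) as [Hub Hlub].
destruct (Lub_Rbar E) as [r | |]; [reflexivity | |].
- exfalso; apply (Hlub (Finite M)); intros x Hx; apply HM, Hx.
- exfalso; apply (Hub x0 HE).
Qed.

Lemma real_Lub_Rbar_ub x : E x -> x <= real (Lub_Rbar E).
Proof.
intros Hx; destruct (Lub_Rbar_correct E) as [Hub _].
rewrite Lub_Rbar_bounded_finite in Hub; exact (Hub x Hx).
Qed.

Lemma real_Lub_Rbar_least M' : (forall x, E x -> x <= M') -> real (Lub_Rbar E) <= M'.
Proof.
intros HM'; destruct (Lub_Rbar_correct E) as [_ Hlub].
rewrite Lub_Rbar_bounded_finite in Hlub; apply (Hlub (Finite M')).
intros x Hx; apply HM', Hx.
Qed.

Lemma real_Lub_Rbar_approx eps : 0 < eps ->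
  exists x, E x /\ real (Lub_Rbar E) - eps < x.
Proof.
intros he; apply NNPP; intros Hn.
enough (real (Lub_Rbar E) <= real (Lub_Rbar E) - eps) by lra.
apply real_Lub_Rbar_least; intros x Hx.
apply Rnot_lt_le; intros Hlt; apply Hn; exists x; split; assumption.
Qed.

End BoundedLub.

Section Proposition.

Variables (R0 : R) (f f' : R -> R).
Hypotheses (hC1 : C1_on R0 f f') (h1a : f 0 > 0) (h1b : f' 0 = -1)
  (h2a : strictly_increasing_on R0 f').
Variable t1 : R.
Hypotheses (t1_pos : 0 < t1) (t1_lt_R0 : t1 < R0) (f_t1_neg : f t1 < 0).

Local Notation tbar := (tbar_of R0 f').
Local Notation taubar := (taubar_of R0 f).
Local Notation beta := (real (beta_of R0 f)).

Lemma dom_0 : dom R0 0.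
Proof. split; lra. Qed.

Lemma deriv_gt_m1 c : 0 < c < R0 -> -1 < f' c.
Proof. intros Hc; rewrite <- h1b; apply h2a; unfold dom; lra. Qed.

Lemma tbar_ub t : dom R0 t -> f' t < 0 -> t <= tbar.
Proof.
intros Ht Hf't; apply (real_Lub_Rbar_ub _ 0 R0).
- split; [exact dom_0 | lra].
- intros x [[_ Hx] _]; lra.
- split; assumption.
Qed.

Lemma tbar_least M : (forall t, dom R0 t -> f' t < 0 -> t <= M) -> tbar <= M.
Proof.
intros HM; apply (real_Lub_Rbar_least _ 0 R0).
- split; [exact dom_0 | lra].
- intros x [[_ Hx] _]; lra.
- intros x [Hx Hf'x]; apply HM; assumption.
Qed.

Lemma tbar_pos : 0 < tbar.
Proof.
destruct (cont_on_eps _ _ _ (proj2 (hC1 0 dom_0)) 1 Rlt_0_1) as [d [dpos Hd]].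
set (s := Rmin (d / 2) (R0 / 2)).
assert (s_pos : 0 < s) by (apply Rmin_pos; lra).
assert (s_le_d : s <= d / 2) by apply Rmin_l.
assert (s_le_R0 : s <= R0 / 2) by apply Rmin_r.
assert (Hs : Rabs (f' s - f' 0) < 1).
{ apply Hd; [rewrite Rminus_0_r, Rabs_pos_eq; lra | split; lra]. }
rewrite h1b in Hs; apply Rabs_def2 in Hs.
enough (s <= tbar) by lra.
apply tbar_ub; [split; lra | lra].
Qed.

Lemma tbar_le_R0 : tbar <= R0.
Proof. apply tbar_least; intros t [_ Ht] _; lra. Qed.

Lemma deriv_neg_lt_tbar t : 0 <= t < tbar -> f' t < 0.
Proof.
intros Ht; apply Rnot_le_lt; intros Hge.
enough (tbar <= t) by lra.
apply tbar_least; intros x Hx Hf'x; apply Rnot_lt_le; intros Hxt.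
assert (f' t < f' x) by (apply h2a; unfold dom in *; pose proof tbar_le_R0; lra).
lra.
Qed.

(* A negative [f' t] at [t >= tbar] would force [t = tbar]; continuity of [f']
   then gives points beyond [tbar] where [f'] is still negative. *)
Lemma deriv_nonneg_ge_tbar t : dom R0 t -> ~ (0 <= t < tbar) -> 0 <= f' t.
Proof.
intros [t0 tR] Hn; apply Rnot_lt_le; intros Hneg.
assert (t_le : t <= tbar) by (apply tbar_ub; [split|]; assumption).
destruct (cont_on_eps _ _ _ (proj2 (hC1 t (conj t0 tR))) (- f' t) ltac:(lra))
  as [d [dpos Hd]].
set (h := Rmin (d / 2) ((R0 - t) / 2)).
assert (h_pos : 0 < h) by (apply Rmin_pos; lra).
assert (h_le_d : h <= d / 2) by apply Rmin_l.
assert (h_le_R0 : h <= (R0 - t) / 2) by apply Rmin_r.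
assert (Hs : Rabs (f' (t + h) - f' t) < - f' t).
{ apply Hd; [replace (t + h - t) with h by ring; rewrite Rabs_pos_eq | split]; lra. }
apply Rabs_def2 in Hs.
assert (t + h <= tbar) by (apply tbar_ub; [split|]; lra).
lra.
Qed.

Lemma f_decreasing_le_tbar a b : 0 <= a < b -> b <= tbar -> b < R0 -> f b < f a.
Proof.
intros Ha Hb HR; destruct (C1_on_MVT R0 f f' hC1 a b) as [c [Hc Hmvt]]; try lra.
assert (f' c < 0) by (apply deriv_neg_lt_tbar; lra).
assert (f' c * (b - a) < 0) by (apply Rmult_neg_pos; lra).
lra.
Qed.

Lemma f_increasing_ge_tbar a b : tbar <= a <= b -> b < R0 -> f a <= f b.
Proof.
intros Ha HR; destruct (Req_dec a b) as [-> | ab]; [lra|].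
destruct (C1_on_MVT R0 f f' hC1 a b) as [c [Hc Hmvt]]; try (pose proof tbar_pos; lra).
assert (0 <= f' c) by (apply deriv_nonneg_ge_tbar; unfold dom; pose proof tbar_pos; lra).
assert (0 <= f' c * (b - a)) by (apply Rmult_le_pos; lra).
lra.
Qed.

Lemma f_lower_bound a b : 0 <= a <= b -> b < R0 -> f a - (b - a) <= f b.
Proof.
intros Ha HR; destruct (Req_dec a b) as [-> | ab]; [lra|].
destruct (C1_on_MVT R0 f f' hC1 a b) as [c [Hc Hmvt]]; try lra.
assert (-1 < f' c) by (apply deriv_gt_m1; lra).
assert (-1 * (b - a) <= f' c * (b - a)) by (apply Rmult_le_compat_r; lra).
lra.
Qed.

Lemma zero_lt_tbar : exists z, 0 < z < tbar /\ f z = 0.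
Proof.
pose proof tbar_pos as tbar_pos; pose proof tbar_le_R0 as tbar_le_R0.
assert (Hneg : exists t, 0 < t <= tbar /\ t < R0 /\ f t < 0).
{ destruct (Rlt_le_dec t1 tbar) as [Hlt | Hge].
  - exists t1; repeat split; lra.
  - exists tbar; assert (f tbar <= f t1) by (apply f_increasing_ge_tbar; lra).
    repeat split; lra. }
destruct Hneg as [t [[t_pos t_le] [t_lt fneg]]].
destruct (C1_on_IVT R0 f f' hC1 0 t) as [z [Hz Hfz]]; try lra.
exists z; split; [|exact Hfz].
destruct (Req_dec z 0) as [-> | z0]; [lra|].
destruct (Req_dec z t) as [-> | zt]; lra.
Qed.

Lemma zero_lt_tbar_is_min z : 0 < z < tbar -> f z = 0 -> is_min_zero R0 f z.
Proof.
intros Hz Hfz; pose proof tbar_le_R0.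
split; [split; lra|]; split; [exact Hfz|].
intros s [s0 sR] Hfs; apply Rnot_lt_le; intros Hsz.
assert (f z < f s) by (apply f_decreasing_le_tbar; lra); lra.
Qed.

Lemma taubar_ub t : dom R0 t -> f t < 0 -> t <= taubar.
Proof.
intros Ht Hft; apply (real_Lub_Rbar_ub _ t1 R0).
- split; [split; lra | exact f_t1_neg].
- intros x [[_ Hx] _]; lra.
- split; assumption.
Qed.

Lemma taubar_le_R0 : taubar <= R0.
Proof.
apply (real_Lub_Rbar_least _ t1 R0).
- split; [split; lra | exact f_t1_neg].
- intros x [[_ Hx] _]; lra.
- intros x [[_ Hx] _]; lra.
Qed.

(* Past the first zero [z], [f] is negative all the way up to [tbar]. *)
Lemma tbar_le_taubar : tbar <= taubar.
Proof.
destruct zero_lt_tbar as [z [Hz Hfz]]; pose proof tbar_le_R0.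
apply Rnot_lt_le; intros Hlt.
set (s := (Rmax taubar z + tbar) / 2).
assert (Rmax taubar z < tbar) by (apply Rmax_lub_lt; lra).
pose proof (Rmax_l taubar z); pose proof (Rmax_r taubar z).
assert (f s < f z) by (apply f_decreasing_le_tbar; unfold s; lra).
assert (s <= taubar) by (apply taubar_ub; [unfold dom, s; split|]; lra).
unfold s in *; lra.
Qed.

Lemma beta_spec :
  beta_of R0 f = Finite beta /\
  (forall t, dom R0 t -> - f t <= beta) /\
  (forall eps, 0 < eps -> exists t, dom R0 t /\ beta - eps < - f t).
Proof.
assert (H0 : exists t, dom R0 t /\ - f 0 = - f t) by (exists 0; split; [exact dom_0 | reflexivity]).
assert (HM : forall x, (exists t, dom R0 t /\ x = - f t) -> x <= R0 - f 0).
{ intros x [t [[t0 tR] ->]]; assert (f 0 - (t - 0) <= f t) by (apply f_lower_bound; lra).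
  lra. }
split; [exact (Lub_Rbar_bounded_finite _ _ _ H0 HM)|]; split.
- intros t Ht; apply (real_Lub_Rbar_ub _ _ _ H0 HM); exists t; split; [exact Ht | reflexivity].
- intros eps he.
  destruct (real_Lub_Rbar_approx _ _ _ H0 HM eps he) as [x [[t [Ht ->]] Hx]].
  exists t; split; assumption.
Qed.

(* Points near [sup (-f)] can be taken to the left of [tbar]: beyond [tbar],
   [-f] does not exceed [-f tbar], which is approached from the left. *)
Lemma beta_approx_lt_tbar eps : 0 < eps ->
  exists s, 0 <= s < tbar /\ beta - eps < - f s.
Proof.
intros he; pose proof tbar_pos; pose proof tbar_le_R0.
destruct (proj2 (proj2 beta_spec) eps he) as [t [[t0 tR] Ht]].
destruct (Rlt_le_dec t tbar) as [Hlt | Hge]; [exists t; split; lra|].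
assert (f tbar <= f t) by (apply f_increasing_ge_tbar; lra).
set (gap := - f tbar - (beta - eps)).
set (s := Rmax 0 (tbar - gap / 2)).
assert (0 <= s) by apply Rmax_l.
assert (tbar - gap / 2 <= s) by apply Rmax_r.
assert (s < tbar) by (apply Rmax_lub_lt; unfold gap; lra).
assert (f s - (tbar - s) <= f tbar) by (apply f_lower_bound; lra).
exists s; split; [lra|]; unfold gap in *; lra.
Qed.

Lemma f_lim_left_tbar : filterlim f (at_left tbar) (locally (- beta)).
Proof.
pose proof tbar_le_R0.
apply filterlim_locally; intros eps.
destruct (beta_approx_lt_tbar eps (cond_pos eps)) as [s [Hs Hfs]].
exists (mkposreal (tbar - s) ltac:(lra)); simpl; intros u Hu Hlt.
change (Rabs (u - tbar) < tbar - s) in Hu; apply Rabs_def2 in Hu.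
assert (f u < f s) by (apply f_decreasing_le_tbar; lra).
assert (- f u <= beta) by (apply (proj1 (proj2 beta_spec)); split; lra).
change (Rabs (f u - - beta) < eps); apply Rabs_def1; lra.
Qed.

Lemma beta_pos : 0 < beta.
Proof.
assert (- f t1 <= beta) by (apply (proj1 (proj2 beta_spec)); split; lra).
lra.
Qed.

Lemma beta_lt_tbar : beta < tbar.
Proof.
destruct (beta_approx_lt_tbar (f 0) h1a) as [s [Hs Hfs]].
assert (f 0 - (s - 0) <= f s) by (apply f_lower_bound; pose proof tbar_le_R0; lra).
lra.
Qed.

End Proposition.

Theorem proposition2p3 (R0 : R) (f f' : R -> R)
  (hC1 : C1_on R0 f f')
  (h1a : f 0 > 0) (h1b : f' 0 = -1)
  (h2a : strictly_increasing_on R0 f') (h2b : convex_on R0 f')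
  (h3 : exists t, 0 < t < R0 /\ f t < 0) :
  let beta := beta_of R0 f in
  let taubar := taubar_of R0 f in
  let tbar := tbar_of R0 f' in
  (* (i) *)
  (forall t, 0 <= t < tbar -> f' t < 0) /\
  (forall t, dom R0 t -> ~ (0 <= t < tbar) -> 0 <= f' t) /\
  (* (ii) *)
  (exists tstar, is_min_zero R0 f tstar /\
     0 < tstar /\ tstar < tbar /\ tbar <= taubar /\ taubar <= R0) /\
  (* (iii) *)
  (exists b : R, beta = Finite b /\
     filterlim f (at_left tbar) (locally (- b)) /\
     0 < b /\ b < tbar).
Proof.
intros beta taubar tbar; subst beta taubar tbar.
destruct h3 as [t1 [[t1_pos t1_lt_R0] f_t1_neg]].
destruct (zero_lt_tbar R0 f f' hC1 h1a h1b t1 t1_pos t1_lt_R0 f_t1_neg)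
  as [tstar [Htstar Hftstar]].
destruct (beta_spec R0 f f' hC1 h1b h2a t1 t1_pos t1_lt_R0) as [beta_fin _].
split; [eapply deriv_neg_lt_tbar; eassumption|].
split; [eapply deriv_nonneg_ge_tbar; eassumption|].
split.
- exists tstar; split; [eapply zero_lt_tbar_is_min; eassumption|].
  split; [lra|]; split; [lra|].
  split; [eapply tbar_le_taubar | eapply taubar_le_R0]; eassumption.
- exists (real (beta_of R0 f)); split; [exact beta_fin|].
  split; [eapply f_lim_left_tbar; eassumption|].
  split; [eapply beta_pos | eapply beta_lt_tbar]; eassumption.
Qed.
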